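(* Let $k$ be a non-negative integer, $a_0,\dots,a_k\in\mathbb{C}$, and $\Lambda=\sum_{i=0}^{k}a_i(Dx)^iD$ acting on $\mathcal{P}$. (i) For any positive integer $k$, $\Lambda=0$ if and only if $a_i=0$ for $i=0,\dots,k$. (ii) Suppose $a_k\neq0$. Then $\Lambda$ is a lowering operator if and only if the polynomial $f(x)=\sum_{i=0}^{k}a_ix^i$ has no positive integer root.
   Context: $\mathcal{P}$ is the space of complex polynomials in $x$; $D$ is the derivative, $x$ is multiplication by $x$, and products of operators are compositions. A lowering operator is a linear map $\mathcal{O}:\mathcal{P}\to\mathcal{P}$ with $\mathcal{O}(1)=0$ and $\deg(\mathcal{O}(x^n))=n-1$ for all $n\ge1$. *)

From mathcomp Require Import all_boot all_algebra complex reals.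
Set Implicit Arguments. Unset Strict Implicit. Unset Printing Implicit Defensive.
Import GRing.Theory.
Local Open Scope ring_scope.

Section Ops.
Variable F : fieldType.

Definition opD (p : {poly F}) : {poly F} := deriv p.
Definition opX (p : {poly F}) : {poly F} := 'X * p.
Definition opDx (p : {poly F}) : {poly F} := opD (opX p).

Definition Lambda (k : nat) (a : nat -> F) (p : {poly F}) : {poly F} :=
  \sum_(i < k.+1) a i *: iter i opDx (opD p).

(* Lowering operator: linear map O with O(1) = 0 and deg O(x^n) = n-1 for n >= 1
   (deg q = n - 1 with n >= 1 is  size q = n). *)
Definition lowering (O : {poly F} -> {poly F}) : Prop :=
  (forall (c : F) (p q : {poly F}), O (c *: p + q) = c *: O p + O q) /\
  O 1 = 0 /\
  (forall n : nat, (0 < n)%N -> size (O 'X^n) = n).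

Definition fpoly (k : nat) (a : nat -> F) : {poly F} :=
  \sum_(i < k.+1) a i *: 'X^i.
End Ops.

From mathcomp Require Import all_boot all_algebra complex reals.
Local Open Scope ring_scope.
Import GRing.Theory Num.Theory.

(* The monomials are eigenvectors of [Dx]: [(Dx) x^m = (m+1) x^m].  Hence
   [Lambda x^(m+1) = (m+1) f(m+1) x^m], where [f] is the polynomial with
   coefficients [a_i].  In characteristic 0 the factor [m+1] never vanishes, so
   [Lambda] lowers the degree of every monomial exactly by one iff [f] has no
   positive integer root, and [Lambda] vanishes identically iff [f] vanishes at
   every positive integer, i.e. iff [f = 0]. *)

Section Operators.
Variable F : fieldType.
Implicit Types (a : nat -> F) (p q : {poly F}).

Lemma opDx_linear (c : F) p q : opDx (c *: p + q) = c *: opDx p + opDx q.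
Proof. by rewrite /opDx /opD /opX mulrDr derivD -scalerAr derivZ. Qed.

Lemma iter_opDx_linear i (c : F) p q :
  iter i (@opDx F) (c *: p + q) = c *: iter i (@opDx F) p + iter i (@opDx F) q.
Proof. by elim: i => //= i ->; rewrite opDx_linear. Qed.

Lemma iter_opDx0 i : iter i (@opDx F) 0 = 0.
Proof. by elim: i => //= i ->; rewrite /opDx /opD /opX mulr0 deriv0. Qed.

Lemma iter_opDxZ i (c : F) p : iter i (@opDx F) (c *: p) = c *: iter i (@opDx F) p.
Proof. by have := iter_opDx_linear i c p 0; rewrite !addr0 iter_opDx0 addr0. Qed.

Lemma iter_opDx_Xn i m : iter i (@opDx F) 'X^m = (m.+1%:R ^+ i) *: 'X^m.
Proof.
elim: i => [|i IH] /=; first by rewrite scale1r.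
rewrite IH -[_ *: 'X^m]addr0 opDx_linear {2}/opDx /opD /opX mulr0 deriv0 addr0.
by rewrite /opDx /opD /opX -exprS derivXn /= -scaler_nat scalerA exprS mulrC.
Qed.

Lemma Lambda_linear k a (c : F) p q :
  Lambda k a (c *: p + q) = c *: Lambda k a p + Lambda k a q.
Proof.
rewrite /Lambda scaler_sumr -big_split; apply: eq_bigr => i _.
by rewrite /opD derivD derivZ iter_opDx_linear scalerDr !scalerA mulrC.
Qed.

Lemma Lambda1 k a : Lambda k a 1 = 0.
Proof.
by rewrite /Lambda big1 // => i _; rewrite /opD derivC iter_opDx0 scaler0.
Qed.

Lemma horner_fpoly k a (x : F) : (fpoly k a).[x] = \sum_(i < k.+1) a i * x ^+ i.
Proof.
by rewrite /fpoly horner_sum; apply: eq_bigr => i _; rewrite hornerZ hornerXn.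
Qed.

Lemma coef_fpoly k a i : (i <= k)%N -> (fpoly k a)`_i = a i.
Proof. by move=> le_ik; rewrite /fpoly -(poly_def k.+1 a) coef_poly ltnS le_ik. Qed.

Lemma Lambda_Xn k a m :
  Lambda k a 'X^(m.+1) = (m.+1%:R * (fpoly k a).[m.+1%:R]) *: 'X^m.
Proof.
rewrite /Lambda /opD derivXn -scaler_nat horner_fpoly mulr_sumr scaler_suml.
apply: eq_bigr => i _.
by rewrite iter_opDxZ iter_opDx_Xn !scalerA mulrA [_ * a i]mulrC.
Qed.

End Operators.

Lemma poly_eq0_roots_pnat (R : numDomainType) (p : {poly R}) :
  (forall n : nat, (0 < n)%N -> root p n%:R) -> p = 0.
Proof.
move=> p_roots; apply/eqP; apply: contraT => p_neq0.
set rs := [seq (j.+1)%:R : R | j <- iota 0 (size p)].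
have rs_roots : all (root p) rs by apply/allP => _ /mapP [j _ ->]; apply: p_roots.
have rs_uniq : uniq rs.
  by rewrite map_inj_uniq ?iota_uniq // => x y /eqP; rewrite eqr_nat eqSS => /eqP.
by have := max_poly_roots p_neq0 rs_roots rs_uniq; rewrite size_map size_iota ltnn.
Qed.

Section CharacteristicZero.
Variable F : numFieldType.
Implicit Types (a : nat -> F).

Lemma Lambda_Xn_eq0 k a m :
  (Lambda k a 'X^(m.+1) == 0) = root (fpoly k a) m.+1%:R.
Proof.
by rewrite Lambda_Xn scaler_eq0 mulf_eq0 pnatr_eq0 -size_poly_eq0 size_polyXn orbF.
Qed.

Lemma Lambda_eq0P k a :
  (forall p : {poly F}, Lambda k a p = 0) <-> (forall i, (i <= k)%N -> a i = 0).
Proof.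
split=> [Lambda0 i le_ik | a0 p].
  have f0 : fpoly k a = 0.
    by apply: poly_eq0_roots_pnat => -[//|m] _; rewrite -Lambda_Xn_eq0 Lambda0.
  by rewrite -(@coef_fpoly _ k a i le_ik) f0 coef0.
by rewrite /Lambda big1 // => i _; rewrite a0 ?scale0r // -ltnS.
Qed.

Lemma lowering_LambdaP k a :
  lowering (Lambda k a) <-> (forall n, (0 < n)%N -> ~~ root (fpoly k a) n%:R).
Proof.
split=> [[_ [_ size_Lambda]] [//|m] _ | no_roots].
  by rewrite -Lambda_Xn_eq0 -size_poly_eq0 size_Lambda.
split; [exact: Lambda_linear | split; [exact: Lambda1|]] => -[//|m] _.
rewrite Lambda_Xn size_scale ?size_polyXn //.
by rewrite mulf_neq0 ?pnatr_eq0 ?no_roots.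
Qed.

End CharacteristicZero.

Theorem proposition2 (R : realType) (k : nat) (a : nat -> R[i]) :
  ((0 < k)%N ->
     ((forall p : {poly R[i]}, Lambda k a p = 0) <->
      (forall i : nat, (i <= k)%N -> a i = 0)))
  /\
  (a k != 0 ->
     (lowering (Lambda k a) <->
      (forall n : nat, (0 < n)%N -> ~~ root (fpoly k a) n%:R))).
Proof. by split=> _; [exact: Lambda_eq0P | exact: lowering_LambdaP]. Qed.
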